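(* Let $\mathbf{R}^{\mathrm{o}}$ be a finite set of obligations and $\mathbf{R}=(\emptyset,\mathbf{R}^{\mathrm{o}})$. Let $a,x$ be Boolean formulas, let the overriding relation $\triangleright$ be computed relative to $\Gamma=\{\Diamond a\}$, and let entailment range over replete $\mathbf{R}$-ordered models. If $x\in\bigcap\mathit{outf}(\mathbf{R}^{\mathrm{o}}_{\triangleright},a,\{a\})$ (with underlying I/O operation $out_4^{+}$), then $(\{\Diamond a\},\mathbf{R})\mid\sim\bigcirc(x/a)$.
   Context: Boolean formulas are built from propositional letters with the classical connectives; $\models_{\mathrm{PL}}$ is classical propositional entailment, $\models_{\mathrm{S5}}$ entailment in S5; $\Diamond A$ abbreviates $\neg\Box\neg A$, and $w\models\Box A$ iff $A$ holds at every world of the model. An obligation is $\bigcirc(B/A)$ with $A,B$ Boolean; body $b(\bigcirc(B/A))=A$, head $h(\bigcirc(B/A))=B$. Overriding relative to $\Gamma$: $r_j\triangleright r_i$ iff (i) $\{h(r_i),h(r_j)\}\cup\Gamma\models_{\mathrm{S5}}\bot$; (ii) $b(r_j)\models_{\mathrm{PL}}b(r_i)$ and $b(r_i)\not\models_{\mathrm{PL}}b(r_j)$; (iii) $\{h(r_i),b(r_j)\}\not\models_{\mathrm{PL}}\bot$. An $\mathbf{R}$-ordered model (no normality conditionals) is $M=(W,\succeq_N,\succeq_I,v)$, $W\neq\emptyset$, $v$ a valuation, $\succeq_N=W\times W$, and $w_1\succeq_I w_2$ iff $V(w_1)\subseteq V(w_2)$, where $V(w)=\{r_i\in\mathbf{R}^{\mathrm{o}}: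 w\models b(r_i)\wedge\neg h(r_i)$ and $w\not\models b(r_j)$ for all $r_j\in\mathbf{R}^{\mathrm{o}}$ with $r_j\triangleright r_i\}$. $\max_{\succeq}(X)=\{w\in X:\forall u\in X(u\succeq w\Rightarrow w\succeq u)\}$; $\Vert A\Vert$ = set of worlds where $A$ holds. For $U,U'\subseteq W$, $U\succeq_I^{s}U'$ iff for every $u'\in U'$ there is $u\in U$ with $u\succeq_I u'$. Truth of obligations: $w\models\bigcirc(B/A)$ iff $\max_{\succeq_N}(\Vert A\wedge\neg B\Vert)\not\succeq_I^{s}\max_{\succeq_N}(\Vert A\wedge B\Vert)$. $M$ is replete if every PL-consistent Boolean formula holds at some world. $(\Gamma,\mathbf{R})\mid\sim\varphi$ iff in every (replete) $\mathbf{R}$-ordered model, every world satisfying all of $\Gamma$ satisfies $\varphi$. I/O logic: for a set $H$ of pairs of Boolean formulas, $\mathrm{m}(H)=\{a\rightarrow x:(a,x)\in H\}$, $out_4^{+}(H,a)=\{x:\{a\}\cup\mathrm{m}(H)\models_{\mathrm{PL}}x\}$; $\mathit{maxf}(N,a,C)$ is the set of $\subseteq$-maximal $H\subseteq N$ with $out_4^{+}(H,a)\cup C$ PL-consistent; $\mathit{outf}(N,a,C)=\{out_4^{+}(H,a):H\in\mathit{maxf}(N,a,C)\}$. Translation: for $r_i=\bigcirc(x/a)$, $D(r_i)=\{r_j\in\mathbf{R}^{\mathrm{o}}:r_j\triangleright r_i\}$, $r_i^{\triangleright}=(a\wedge\bigwedge_{r_j\in D(r_i)}\neg b(r_j),x)$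 if $D(r_i)\neq\emptyset$ and $(a,x)$ otherwise; $\mathbf{R}^{\mathrm{o}}_{\triangleright}=\{r^{\triangleright}:r\in\mathbf{R}^{\mathrm{o}}\}$. *)

From Stdlib Require Import List Bool ClassicalEpsilon.
Import ListNotations.

Inductive form : Type :=
| Var : nat -> form
| Bot : form
| Neg : form -> form
| And : form -> form -> form
| Or  : form -> form -> form
| Imp : form -> form -> form.

Fixpoint eval (v : nat -> bool) (f : form) : bool :=
  match f with
  | Var n => v n
  | Bot => false
  | Neg g => negb (eval v g)
  | And g h => eval v g && eval v h
  | Or g h => eval v g || eval v h
  | Imp g h => implb (eval v g) (eval v h)
  end.

Definition pl_ent (G : form -> Prop) (x : form) : Prop :=
  forall v : nat -> bool, (forall g, G g -> eval v g = true) -> eval v x = true.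

Definition pl_ent1 (A B : form) : Prop := pl_ent (fun g => g = A) B.

Definition pl_consistent (A : form) : Prop := ~ pl_ent1 A Bot.

Inductive mform : Type :=
| MVar : nat -> mform
| MBot : mform
| MNeg : mform -> mform
| MAnd : mform -> mform -> mform
| MOr  : mform -> mform -> mform
| MImp : mform -> mform -> mform
| MBox : mform -> mform.

Fixpoint emb (f : form) : mform :=
  match f with
  | Var n => MVar n
  | Bot => MBot
  | Neg g => MNeg (emb g)
  | And g h => MAnd (emb g) (emb h)
  | Or g h => MOr (emb g) (emb h)
  | Imp g h => MImp (emb g) (emb h)
  end.

Definition MDia (A : mform) : mform := MNeg (MBox (MNeg A)).

(** Truth at a world of a model with universal accessibility (S5):
    w |= Box A iff A holds at every world of the model. *)
Fixpoint msat {W : Type} (val : W -> nat -> bool) (w : W) (f : mform) : Prop :=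
  match f with
  | MVar n => val w n = true
  | MBot => False
  | MNeg g => ~ msat val w g
  | MAnd g h => msat val w g /\ msat val w h
  | MOr g h => msat val w g \/ msat val w h
  | MImp g h => msat val w g -> msat val w h
  | MBox g => forall u : W, msat val u g
  end.

Definition s5_ent (G : mform -> Prop) (phi : mform) : Prop :=
  forall (W : Type) (val : W -> nat -> bool) (w : W),
    (forall g, G g -> msat val w g) -> msat val w phi.

(** * Obligations O(B/A) represented as pairs (A, B) = (body, head) *)
Definition obl : Type := (form * form)%type.
Definition body (r : obl) : form := fst r.
Definition head (r : obl) : form := snd r.

(** Overriding relative to Gamma: [overrides G rj ri] means rj |> ri. *)
Definition overrides (G : mform -> Prop) (rj ri : obl) : Prop :=
  s5_ent (fun m => m = emb (head ri) \/ m = emb (head rj) \/ G m) MBot /\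
  (pl_ent1 (body rj) (body ri) /\ ~ pl_ent1 (body ri) (body rj)) /\
  ~ pl_ent (fun g => g = head ri \/ g = body rj) Bot.

(** * R-ordered models (R = (empty, Ro): no normality conditionals) *)
Section OrderedModel.
Variables (Ro : list obl) (G : mform -> Prop) (W : Type) (val : W -> nat -> bool).

Definition holds (w : W) (A : form) : Prop := eval (val w) A = true.

Definition extent (A : form) : W -> Prop := fun w => holds w A.

Definition Vset (w : W) : obl -> Prop := fun ri =>
  In ri Ro /\ holds w (And (body ri) (Neg (head ri))) /\
  (forall rj, In rj Ro -> overrides G rj ri -> ~ holds w (body rj)).

Definition geN (w1 w2 : W) : Prop := True.

Definition geI (w1 w2 : W) : Prop := forall r, Vset w1 r -> Vset w2 r.

Definition maxrel (ge : W -> W -> Prop) (X : W -> Prop) : W -> Prop :=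
  fun w => X w /\ (forall u, X u -> ge u w -> ge w u).

Definition geI_s (U U' : W -> Prop) : Prop :=
  forall u', U' u' -> exists u, U u /\ geI u u'.

Definition obl_sat (w : W) (r : obl) : Prop :=
  ~ geI_s (maxrel geN (extent (And (body r) (Neg (head r)))))
          (maxrel geN (extent (And (body r) (head r)))).

Definition replete : Prop :=
  forall A : form, pl_consistent A -> exists w, holds w A.

End OrderedModel.

Definition nm_entails (Ro : list obl) (Gov : mform -> Prop)
    (Gamma : mform -> Prop) (r : obl) : Prop :=
  forall (W : Type) (val : W -> nat -> bool),
    replete W val ->
    forall w : W, (forall g, Gamma g -> msat val w g) -> obl_sat Ro Gov W val w r.

Definition mset (H : obl -> Prop) : form -> Prop :=
  fun f => exists p, H p /\ f = Imp (fst p) (snd p).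

Definition out4p (H : obl -> Prop) (a : form) : form -> Prop :=
  fun x => pl_ent (fun g => g = a \/ mset H g) x.

Definition pconsistent (S : form -> Prop) : Prop := ~ pl_ent S Bot.

Definition subset_obl (H H' : obl -> Prop) : Prop := forall p, H p -> H' p.

Definition io_cons (H : obl -> Prop) (a : form) (C : form -> Prop) : Prop :=
  pconsistent (fun f => out4p H a f \/ C f).

Definition maxf (N : obl -> Prop) (a : form) (C : form -> Prop) (H : obl -> Prop) : Prop :=
  subset_obl H N /\ io_cons H a C /\
  (forall H', subset_obl H H' -> subset_obl H' N -> io_cons H' a C -> subset_obl H' H).

Definition in_cap_outf (N : obl -> Prop) (a : form) (C : form -> Prop) (x : form) : Prop :=
  forall H, maxf N a C H -> out4p H a x.

Definition dec (P : Prop) : bool :=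
  if excluded_middle_informative P then true else false.

(** conjunction of a nonempty list (Top for the empty list, unused) *)
Fixpoint bigconj (l : list form) : form :=
  match l with
  | [] => Neg Bot
  | [f] => f
  | f :: l' => And f (bigconj l')
  end.

Definition Dlist (Ro : list obl) (G : mform -> Prop) (ri : obl) : list obl :=
  filter (fun rj => dec (overrides G rj ri)) Ro.

Definition transl (Ro : list obl) (G : mform -> Prop) (ri : obl) : obl :=
  match Dlist Ro G ri with
  | [] => ri
  | D => (And (body ri) (bigconj (map (fun rj => Neg (body rj)) D)), head ri)
  end.

Definition transl_set (Ro : list obl) (G : mform -> Prop) : obl -> Prop :=
  fun p => exists r, In r Ro /\ p = transl Ro G r.

From Pilot Require Import Defs.
From Stdlib Require Import List Bool Classical ClassicalEpsilon Lia Wf_nat.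
Import ListNotations.

(* Since R^o is finite, among the a-worlds (there is one, by Diamond a) some
   world u' has an inclusion-minimal violation set V(u').  The material
   implication of r^|> holds at a world exactly when r is not in its
   violation set, so the rules of R^o_|> whose material implications hold at
   u' form a maximal a-consistent family: any consistent extension is
   realised, by repleteness, at an a-world u with V(u) contained in V(u'),
   hence V(u) = V(u').  Thus x follows from a together with these rules, so x
   holds at u' and at every a-world at least as ideal as u'; no world of
   ||a /\ ~x|| can then dominate u'. *)

Lemma dec_iff (P : Prop) : dec P = true <-> P.
Proof.
  unfold dec; destruct excluded_middle_informative; split; intuition congruence.
Qed.

Lemma msat_emb {W : Type} (val : W -> nat -> bool) (w : W) (f : form) :
  msat val w (emb f) <-> eval (val w) f = true.
Proof.
  induction f; simpl; try tauto.
  - split; [tauto | discriminate].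
  - rewrite IHf; destruct (eval (val w) f); simpl; intuition congruence.
  - rewrite IHf1, IHf2, andb_true_iff; tauto.
  - rewrite IHf1, IHf2, orb_true_iff; tauto.
  - rewrite IHf1, IHf2.
    destruct (eval (val w) f1), (eval (val w) f2); simpl; intuition congruence.
Qed.

Lemma msat_dia_emb {W : Type} (val : W -> nat -> bool) (w : W) (a : form) :
  msat val w (MDia (emb a)) -> exists u, eval (val u) a = true.
Proof.
  intros Hdia; apply NNPP; intros Hnone; apply Hdia.
  intros u Hu; apply Hnone; exists u; apply msat_emb; exact Hu.
Qed.

Lemma eval_bigconj (v : nat -> bool) (l : list form) :
  eval v (bigconj l) = forallb (eval v) l.
Proof.
  induction l as [|f l IH]; [reflexivity |].
  destruct l as [|g l]; simpl in *.
  - rewrite andb_true_r; reflexivity.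
  - rewrite IH; reflexivity.
Qed.

Definition material (p : obl) : form := Imp (fst p) (snd p).

Lemma out4p_sound (H : obl -> Prop) (a x : form) (v : nat -> bool) :
  eval v a = true -> (forall p, H p -> eval v (material p) = true) ->
  out4p H a x -> eval v x = true.
Proof.
  intros Ha HH Hx; apply Hx.
  intros g [-> | [p [Hp ->]]]; [exact Ha | exact (HH p Hp)].
Qed.

Lemma io_cons_valuation (H : obl -> Prop) (a : form) (C : form -> Prop) :
  io_cons H a C ->
  exists v, eval v a = true /\ forall p, H p -> eval v (material p) = true.
Proof.
  intros Hcons; apply not_all_ex_not in Hcons as [v Hv].
  apply imply_to_and in Hv as [Hv _].
  exists v; split.
  - apply Hv; left; intros v' Hv'; apply Hv'; left; reflexivity.
  - intros p Hp; apply Hv; left; intros v' Hv'; apply Hv'; right; exists p; auto.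
Qed.

Lemma io_cons_of_valuation (H : obl -> Prop) (a : form) (C : form -> Prop)
    (v : nat -> bool) :
  eval v a = true -> (forall p, H p -> eval v (material p) = true) ->
  (forall f, C f -> eval v f = true) -> io_cons H a C.
Proof.
  intros Ha HH HC Hbot.
  assert (Hfalse : eval v Bot = true).
  { apply Hbot; intros g [Hg | Hg]; [exact (out4p_sound H a g v Ha HH Hg) | auto]. }
  discriminate Hfalse.
Qed.

(* Finiteness enters here: the premises realised by repleteness form a
   single formula. *)
Lemma replete_realizes_io_cons (W : Type) (val : W -> nat -> bool)
    (l : list obl) (H : obl -> Prop) (a : form) (C : form -> Prop) :
  replete W val -> (forall p, H p -> In p l) -> io_cons H a C ->
  exists u, holds W val u a /\ forall p, H p -> holds W val u (material p).
Proof.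
  intros Hrep Hl Hcons.
  set (Phi := And a (bigconj (map material (filter (fun p => dec (H p)) l)))).
  assert (HPhi : forall v, eval v Phi = true <->
            eval v a = true /\ forall p, H p -> eval v (material p) = true).
  { intros v; unfold Phi; cbn [eval].
    rewrite andb_true_iff, eval_bigconj, forallb_forall.
    split; intros [Ha HH]; split; auto.
    - intros p Hp; apply HH, in_map_iff; exists p; split; [reflexivity |].
      apply filter_In; split; [apply Hl; exact Hp | apply dec_iff; exact Hp].
    - intros f Hf; apply in_map_iff in Hf as [p [<- Hp]].
      apply filter_In in Hp as [_ Hp]; apply HH, dec_iff, Hp. }
  destruct (io_cons_valuation H a C Hcons) as [v Hv].
  destruct (Hrep Phi) as [u Hu].
  - intros Hbot; specialize (Hbot v); discriminate Hbot.
    intros g ->; apply HPhi, Hv.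
  - exists u; apply HPhi, Hu.
Qed.

Definition count_in {A : Type} (P : A -> Prop) (l : list A) : nat :=
  length (filter (fun r => dec (P r)) l).

Lemma count_in_le {A : Type} (P Q : A -> Prop) (l : list A) :
  (forall r, In r l -> P r -> Q r) -> count_in P l <= count_in Q l.
Proof.
  unfold count_in; induction l as [|y l IH]; intros HPQ; simpl; [lia |].
  specialize (IH (fun r Hr => HPQ r (or_intror Hr))).
  destruct (dec (P y)) eqn:EP, (dec (Q y)) eqn:EQ; simpl; try lia.
  apply dec_iff, (HPQ y (or_introl eq_refl)), dec_iff in EP; congruence.
Qed.

Lemma count_in_le_incl {A : Type} (P Q : A -> Prop) (l : list A) :
  (forall r, In r l -> P r -> Q r) -> count_in Q l <= count_in P l ->
  forall r, In r l -> Q r -> P r.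
Proof.
  induction l as [|y l IH]; intros HPQ Hcount r Hr HQ; [destruct Hr |].
  assert (HPQ' : forall r, In r l -> P r -> Q r) by (intros; apply HPQ; simpl; auto).
  assert (Hle := count_in_le P Q l HPQ').
  unfold count_in in *; simpl in Hcount.
  destruct (dec (P y)) eqn:EP, (dec (Q y)) eqn:EQ; simpl in Hcount.
  - destruct Hr as [<- | Hr]; [apply dec_iff; exact EP |].
    apply (IH HPQ'); auto; lia.
  - apply dec_iff, (HPQ y (or_introl eq_refl)), dec_iff in EP; congruence.
  - lia.
  - destruct Hr as [<- | Hr]; [apply dec_iff in HQ; congruence |].
    apply (IH HPQ'); auto.
Qed.

Section TranslatedRules.

Variables (Ro : list obl) (G : mform -> Prop) (W : Type) (val : W -> nat -> bool).

Notation V := (Vset Ro G W val).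
Notation geI := (geI Ro G W val).
Notation holds := (holds W val).

Lemma forallb_Dlist_iff (v : nat -> bool) (r : obl) :
  forallb (fun rj => negb (eval v (body rj))) (Dlist Ro G r) = true <->
  (forall rj, In rj Ro -> overrides G rj r -> eval v (body rj) <> true).
Proof.
  rewrite forallb_forall; unfold Dlist; split.
  - intros Hall rj Hj Hov.
    apply not_true_iff_false, negb_true_iff, Hall, filter_In.
    split; [exact Hj | apply dec_iff; exact Hov].
  - intros Hall rj Hj; apply filter_In in Hj as [Hj Hov].
    apply negb_true_iff, not_true_iff_false, Hall; [exact Hj | apply dec_iff, Hov].
Qed.

Lemma eval_material_transl (v : nat -> bool) (r : obl) :
  eval v (material (transl Ro G r)) =
  implb (eval v (body r) && forallb (fun rj => negb (eval v (body rj))) (Dlist Ro G r))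
        (eval v (Defs.head r)).
Proof.
  unfold material, transl; destruct (Dlist Ro G r) as [|d D].
  - simpl; rewrite andb_true_r; reflexivity.
  - cbn [fst snd eval]; rewrite eval_bigconj.
    do 3 f_equal; induction (d :: D) as [|y l IH]; simpl; congruence.
Qed.

Lemma holds_material_transl (u : W) (r : obl) :
  In r Ro -> holds u (material (transl Ro G r)) <-> ~ V u r.
Proof.
  intros Hr; unfold Vset, Defs.holds.
  rewrite eval_material_transl, <- forallb_Dlist_iff; cbn [eval].
  destruct (forallb _ (Dlist Ro G r)), (eval (val u) (body r)),
    (eval (val u) (Defs.head r)); simpl; intuition congruence.
Qed.

Lemma holds_material_transl_geI (u u' : W) (r : obl) :
  In r Ro -> geI u u' ->
  holds u' (material (transl Ro G r)) -> holds u (material (transl Ro G r)).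
Proof.
  intros Hr Hge; rewrite !holds_material_transl by exact Hr.
  intros Hnot Hv; exact (Hnot (Hge r Hv)).
Qed.

(* Smoothness of the ideality ordering: a violation set of least size is
   inclusion-minimal. *)
Lemma maxrel_geI_exists (X : W -> Prop) :
  (exists u, X u) -> exists u, maxrel W geI X u.
Proof.
  intros [u0 Hu0].
  destruct (dec_inh_nat_subset_has_unique_least_element
              (fun n => exists u, X u /\ count_in (V u) Ro = n))
    as [n [[[u [Hu <-]] Hleast] _]].
  - intros n; apply classic.
  - exists (count_in (V u0) Ro), u0; auto.
  - exists u; split; [exact Hu |].
    intros u2 Hu2 Hge r Hr.
    apply (count_in_le_incl (V u2) (V u) Ro); [auto | | exact (proj1 Hr) | exact Hr].
    apply Hleast; exists u2; auto.
Qed.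

Definition rules_holding_at (u : W) : obl -> Prop :=
  fun p => transl_set Ro G p /\ holds u (material p).

Lemma maxf_rules_holding_at (a : form) (u' : W) :
  replete W val -> maxrel W geI (extent W val a) u' ->
  maxf (transl_set Ro G) a (fun f => f = a) (rules_holding_at u').
Proof.
  intros Hrep [Ha' Hmin]; split; [intros p Hp; exact (proj1 Hp) | split].
  - apply (io_cons_of_valuation _ a _ (val u') Ha').
    + intros p Hp; exact (proj2 Hp).
    + intros f ->; exact Ha'.
  - intros H' Hsub HN Hcons.
    destruct (replete_realizes_io_cons W val (map (transl Ro G) Ro) H' a
                (fun f => f = a) Hrep) as [u [Ha HH']]; [| exact Hcons |].
    { intros p Hp; destruct (HN p Hp) as [r [Hr ->]]; apply in_map, Hr. }
    assert (Hge : geI u u').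
    { intros r Hv; apply NNPP; intros Hnv.
      assert (Hr : In r Ro) by exact (proj1 Hv).
      apply (holds_material_transl u' r Hr) in Hnv.
      apply (holds_material_transl u r Hr); [| exact Hv].
      apply HH', Hsub; split; [exists r; auto | exact Hnv]. }
    intros p Hp; destruct (HN p Hp) as [r [Hr ->]].
    split; [exists r; auto |].
    exact (holds_material_transl_geI u' u r Hr (Hmin u Ha Hge) (HH' _ Hp)).
Qed.

Lemma out4p_rules_holding_at_geI (a x : form) (u u' : W) :
  out4p (rules_holding_at u') a x -> holds u a -> geI u u' -> holds u x.
Proof.
  intros Hx Ha Hge.
  apply (out4p_sound (rules_holding_at u') a x (val u) Ha); [| exact Hx].
  intros p [[r [Hr ->]] Hp]; exact (holds_material_transl_geI u u' r Hr Hge Hp).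
Qed.

Lemma obl_sat_of_witness (w u' : W) (a x : form) :
  holds u' (And a x) -> (forall u, holds u (And a (Neg x)) -> ~ geI u u') ->
  obl_sat Ro G W val w (a, x).
Proof.
  intros Hu' Hnone Hdom.
  destruct (Hdom u') as [u [[Hu _] Hge]]; [split; [exact Hu' | intros; exact I] |].
  exact (Hnone u Hu Hge).
Qed.

End TranslatedRules.

Theorem theorem4 (Ro : list obl) (a x : form) :
  in_cap_outf (transl_set Ro (fun m => m = MDia (emb a))) a (fun f => f = a) x ->
  nm_entails Ro (fun m => m = MDia (emb a)) (fun m => m = MDia (emb a)) (a, x).
Proof.
  set (G := fun m => m = MDia (emb a)).
  intros Hx W val Hrep w Hw.
  destruct (msat_dia_emb val w a (Hw _ eq_refl)) as [u0 Hu0].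
  destruct (maxrel_geI_exists Ro G W val (extent W val a) (ex_intro _ u0 Hu0))
    as [u' Hu'].
  assert (Hxo := Hx _ (maxf_rules_holding_at Ro G W val a u' Hrep Hu')).
  pose proof (out4p_rules_holding_at_geI Ro G W val a x) as Hideal.
  apply (obl_sat_of_witness Ro G W val w u').
  - unfold holds; cbn [eval]; apply andb_true_iff; split; [exact (proj1 Hu') |].
    apply (Hideal u' u' Hxo (proj1 Hu')); intros r Hr; exact Hr.
  - intros u Hu Hge; unfold holds in Hu; cbn [eval] in Hu.
    apply andb_true_iff in Hu as [Ha Hnx].
    apply negb_true_iff in Hnx; rewrite (Hideal u u' Hxo Ha Hge) in Hnx; discriminate.
Qed.
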